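(* Let $A$ be a nontrivial closed class of decision tables from $\mathcal M_2^\infty$ and $\psi$ a bounded complexity measure. If $\mathcal H^\infty_{\psi,A}$ is everywhere defined, then for every $n\in\omega$ the value $G_{\psi,A}(n)$ is defined and $\mathcal H^\infty_{\psi,A}(n)\ge G_{\psi,A}(n)-1$.
   Context: Notation: $\omega=\{0,1,2,\dots\}$; $\mathcal P(\omega)$ is the set of nonempty finite subsets of $\omega$; $E_2=\{0,1\}$. $P=\{f_i:i\in\omega\}$ is a set of attributes, $f_i\neq f_j$ for $i\ne j$. Decision tables: $\mathcal M_2^\infty$ is the set of rectangular tables filled with numbers from $E_2$, whose columns are labeled with pairwise different attributes from $P$, whose rows are pairwise different, and each row of which is labeled with a set from $\mathcal P(\omega)$ (its set of decisions). The empty table (no rows) is denoted $\Lambda$ and belongs to $\mathcal M_2^\infty$. For $T\in\mathcal M_2^\infty$: $\Pi(T)$ is the intersection of the decision sets of all rows (common decisions); $\mathrm{At}(T)$ is the set of attributes labeling columns. For nonempty $T$, $\Omega_2(T)$ is the set of finite words (including the empty word $\lambda$) over the alphabet $\{(f_i,\delta):f_i\in\mathrm{At}(T),\delta\in E_2\}$; for $\alpha=(f_{i_1},\delta_1)\cdots(f_{i_m},\delta_m)$, $T\alpha$ is the subtable of $T$ consisting of the rows having value $\delta_j$ in the column $f_{i_j}$ for all $j$, and $T\lambda=T$. Operations: for $D\subseteq\mathrm{At}(T)$, $I(D,T)$ is obtained from $T$ by deleting the columns labeled with attributes from $D$ and, in each group of rows coinciding on the remaining columns, keeping only the first row; $I(\mathrm{At}(T),T)=\Lambda$.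 For $\nu:E_2^{|\mathrm{At}(T)|}\to\mathcal P(\omega)$, $J(\nu,T)$ is obtained by replacing the decision set of each row $\bar\delta$ by $\nu(\bar\delta)$. $[T]=\{J(\nu,I(D,T)):D\subseteq\mathrm{At}(T),\ \nu:E_2^{|\mathrm{At}(T)\setminus D|}\to\mathcal P(\omega)\}$; for nonempty $A\subseteq\mathcal M_2^\infty$, $[A]=\bigcup_{T\in A}[T]$. $A$ is a closed class if $[A]=A$; nontrivial if it contains a nonempty table. Decision trees: a $2$-decision tree is a finite directed rooted tree with at least two nodes in which the root and the edges leaving the root are unlabeled, each terminal node is labeled with a decision from $\omega$, and each other node is labeled with an attribute from $P$, each edge leaving such a node being labeled with a number from $E_2$. $\mathrm{At}(\Gamma)$ is the set of attributes labeling nodes of $\Gamma$. For a complete path $\tau=v_1,d_1,\dots,v_m,d_m,v_{m+1}$ (from the root to a terminal node), $\pi(\tau)=\lambda$ if $m=1$, and otherwise $\pi(\tau)=(f_{i_2},\delta_2)\cdots(f_{i_m},\delta_m)$ where $v_j$ is labeled $f_{i_j}$ and $d_j$ is labeled $\delta_j$; $T(\tau)=T\pi(\tau)$. For $T\ne\Lambda$, a nondeterministic decision tree for $T$ is a $2$-decision tree $\Gamma$ with $\mathrm{At}(\Gamma)\subseteq\mathrm{At}(T)$ such that every row of $T$ belongs to $T(\tau)$ for some complete path $\tau$, and for every complete path $\tau$ either $T(\tau)=\Lambda$ or the decision at the terminal node of $\tau$ belongs to $\Pi(T(\tau))$. A deterministic decision tree for $T$ is a nondeterministic decision tree for $T$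 in which, additionally, exactly one edge leaves the root and the edges leaving any node that is neither the root nor terminal are labeled with pairwise different numbers. Complexity measures: a partially bounded complexity measure is a function $\psi:P^*\to\omega$ on finite words over $P$ such that for all words $\alpha_1,\alpha_2$: $\psi(\alpha_1)=0$ iff $\alpha_1=\lambda$; $\psi(\alpha_1)$ is invariant under permutation of letters; $\psi(\alpha_1)\le\psi(\alpha_1\alpha_2)$; $\psi(\alpha_1\alpha_2)\le\psi(\alpha_1)+\psi(\alpha_2)$. It is bounded if in addition $\psi(\alpha)\ge|\alpha|$ for all $\alpha$. $\psi$ is extended to words $(f_{i_1},\delta_1)\cdots(f_{i_m},\delta_m)$ by $\psi(f_{i_1}\cdots f_{i_m})$ ($\psi(\lambda)=0$). For a $2$-decision tree $\Gamma$, $\psi(\Gamma)=\max_\tau\psi(\pi(\tau))$ over complete paths. For $T\ne\Lambda$, $\psi^d(T)$ (resp. $\psi^a(T)$) is the minimum of $\psi(\Gamma)$ over deterministic (resp. nondeterministic) decision trees $\Gamma$ for $T$; $\psi^d(\Lambda)=\psi^a(\Lambda)=0$. Parameters: $m_\psi(T)=\max\{\psi(f_i):f_i\in\mathrm{At}(T)\}$, $m_\psi(\Lambda)=0$. A word $\alpha\in\Omega_2(T)$ is annihilating for $T$ if $T\alpha=\Lambda$ and $\alpha$ contains no two letters $(f_i,\delta),(f_i,\sigma)$ with $\delta\ne\sigma$; it is irreducible if no word obtained from $\alpha$ by deleting some (at least one) letters is annihilating for $T$; $G(T)$ is the maximum length of an irreducible annihilating word for $T$ if one exists, and $0$ otherwise;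 $G(\Lambda)=0$. For $n\in\omega$: $A_\psi(n)=\{T\in A:m_\psi(T)\le n\}$; $G_{\psi,A}(n)$ is undefined if $\{G(T):T\in A_\psi(n)\}$ is infinite, else its maximum; $\mathcal H^\infty_{\psi,A}(n)$ is undefined if $\{\psi^d(T):T\in A,\psi^a(T)\le n\}$ is infinite, else its maximum. *)

From Stdlib Require Import ClassicalEpsilon.
From mathcomp Require Import all_boot finmap.
Set Implicit Arguments. Unset Strict Implicit. Unset Printing Implicit Defensive.
Local Open Scope fset_scope.

(* the least element of P (meaningful when P is nonempty) *)
Definition least_nat (P : nat -> Prop) : nat :=
  epsilon (inhabits 0) (fun k => P k /\ forall j, P j -> k <= j).
(* the greatest element of P (meaningful when P is finite and nonempty) *)
Definition max_nat (P : nat -> Prop) : nat :=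
  epsilon (inhabits 0) (fun k => P k /\ forall j, P j -> j <= k).
Definition finite_natset (P : nat -> Prop) : Prop :=
  exists s : seq nat, forall k, P k -> k \in s.

(* attribute f_i is represented by i : nat; a row is a 0/1 vector (seq bool)
   listed in column order, together with its decision set (in P(omega)). *)
Record table := Table { tcols : seq nat ; trows : seq (seq bool * {fset nat}) }.

Definition Lambda : table := Table [::] [::].

(* membership in M_2^infty *)
Definition wf_table (T : table) : bool :=
  [&& uniq (tcols T),
      all (fun r => size r.1 == size (tcols T)) (trows T),
      uniq (map fst (trows T)),
      all (fun r => r.2 != fset0) (trows T)
    & (trows T == [::]) == (tcols T == [::])].

Definition At (T : table) : seq nat := tcols T.

Definition value (T : table) (v : seq bool) (f : nat) : bool :=
  nth false v (index f (tcols T)).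

Definition word := seq (nat * bool).

Definition agrees (T : table) (v : seq bool) (a : word) : bool :=
  all (fun l => value T v l.1 == l.2) a.

Definition sub (T : table) (a : word) : table :=
  let rs := [seq r <- trows T | agrees T r.1 a] in
  if rs == [::] then Lambda else Table (tcols T) rs.

Definition in_Pi (d : nat) (T : table) : bool := all (fun r => d \in r.2) (trows T).

Definition remaining (D : seq nat) (T : table) : seq nat :=
  [seq f <- tcols T | f \notin D].

Definition proj (D : seq nat) (T : table) (v : seq bool) : seq bool :=
  [seq p.2 | p <- zip (tcols T) v & p.1 \notin D].

Fixpoint dedup_first (seen : seq (seq bool)) (s : seq (seq bool * {fset nat}))
  : seq (seq bool * {fset nat}) :=
  match s with
  | [::] => [::]
  | r :: s' => if r.1 \in seen then dedup_first seen s'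
               else r :: dedup_first (r.1 :: seen) s'
  end.

Definition opI (D : seq nat) (T : table) : table :=
  let c := remaining D T in
  if c == [::] then Lambda
  else Table c (dedup_first [::] [seq (proj D T r.1, r.2) | r <- trows T]).

Definition opJ (nu : seq bool -> {fset nat}) (T : table) : table :=
  Table (tcols T) [seq (r.1, nu r.1) | r <- trows T].

Definition in_span (T T' : table) : Prop :=
  exists (D : seq nat) (nu : seq bool -> {fset nat}),
    {subset D <= At T} /\
    (forall v : seq bool, size v = size (remaining D T) -> nu v != fset0) /\
    T' = opJ nu (opI D T).

Definition closure (A : table -> Prop) (T' : table) : Prop :=
  exists T, A T /\ in_span T T'.

Definition closed_class (A : table -> Prop) : Prop :=
  (forall T, A T -> wf_table T) /\ (exists T, A T) /\
  (forall T, closure A T <-> A T).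

Definition nontrivial (A : table -> Prop) : Prop :=
  exists T, A T /\ T <> Lambda.

Definition complexity_measure (psi : seq nat -> nat) : Prop :=
  [/\ forall a, psi a = 0 <-> a = [::],
      forall a b, perm_eq a b -> psi a = psi b,
      forall a b, psi a <= psi (a ++ b)
    & forall a b, psi (a ++ b) <= psi a + psi b].

Definition bounded_measure (psi : seq nat -> nat) : Prop :=
  complexity_measure psi /\ forall a, size a <= psi a.

(* a non-root node: terminal (decision) or attribute node with labelled edges *)
Inductive dnode := Leaf of nat | Node of nat & seq (bool * dnode).
(* a tree is given by the (unlabelled) edges leaving the (unlabelled) root *)
Definition dtree := seq dnode.

Fixpoint wf_node (t : dnode) : bool :=
  match t with
  | Leaf _ => true
  | Node _ ch => (0 < size ch) && all (fun e => wf_node e.2) ch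
  end.

Definition wf_tree (G : dtree) : bool := (0 < size G) && all wf_node G.

Fixpoint node_paths (t : dnode) : seq (word * nat) :=
  match t with
  | Leaf d => [:: ([::], d)]
  | Node f ch =>
      flatten [seq [seq ((f, e.1) :: p.1, p.2) | p <- node_paths e.2] | e <- ch]
  end.

Definition tree_paths (G : dtree) : seq (word * nat) := flatten (map node_paths G).

Fixpoint node_attrs (t : dnode) : seq nat :=
  match t with
  | Leaf _ => [::]
  | Node f ch => f :: flatten [seq node_attrs e.2 | e <- ch]
  end.

Definition tree_attrs (G : dtree) : seq nat := flatten (map node_attrs G).

Fixpoint det_node (t : dnode) : bool :=
  match t with
  | Leaf _ => true
  | Node _ ch => uniq (map fst ch) && all (fun e => det_node e.2) ch
  end.

Definition ndt_for (T : table) (G : dtree) : Prop :=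
  [/\ wf_tree G,
      {subset tree_attrs G <= At T},
      (forall r, r \in trows T -> exists2 p, p \in tree_paths G & r \in trows (sub T p.1))
    & (forall p, p \in tree_paths G -> sub T p.1 = Lambda \/ in_Pi p.2 (sub T p.1))].

Definition dt_for (T : table) (G : dtree) : Prop :=
  [/\ ndt_for T G, size G = 1 & all det_node G].

Definition psi_word (psi : seq nat -> nat) (a : word) : nat := psi (map fst a).

Definition tree_cost (psi : seq nat -> nat) (G : dtree) : nat :=
  \max_(p <- tree_paths G) psi_word psi p.1.

Definition psi_d (psi : seq nat -> nat) (T : table) : nat :=
  if excluded_middle_informative (T = Lambda) then 0
  else least_nat (fun k => exists G, dt_for T G /\ tree_cost psi G = k).

Definition psi_a (psi : seq nat -> nat) (T : table) : nat :=
  if excluded_middle_informative (T = Lambda) then 0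
  else least_nat (fun k => exists G, ndt_for T G /\ tree_cost psi G = k).

Definition m_psi (psi : seq nat -> nat) (T : table) : nat :=
  \max_(f <- tcols T) psi [:: f].

Definition consistent (a : word) : Prop :=
  forall l1 l2, l1 \in a -> l2 \in a -> l1.1 = l2.1 -> l1.2 = l2.2.

Definition annihilating (T : table) (a : word) : Prop :=
  [/\ {subset map fst a <= At T}, sub T a = Lambda & consistent a].

Definition irreducible (T : table) (a : word) : Prop :=
  annihilating T a /\
  forall b : word, subseq b a -> size b < size a -> ~ annihilating T b.

Definition G_tab (T : table) : nat :=
  if excluded_middle_informative (T = Lambda) then 0
  else if excluded_middle_informative (exists a, irreducible T a)
  then max_nat (fun k => exists a, irreducible T a /\ size a = k)
  else 0.

Definition A_psi (psi : seq nat -> nat) (A : table -> Prop) (n : nat) (T : table) : Prop :=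
  A T /\ m_psi psi T <= n.

Definition G_set psi A n (k : nat) : Prop := exists T, A_psi psi A n T /\ G_tab T = k.
Definition G_defined psi A n : Prop := finite_natset (G_set psi A n).
Definition G_psiA psi A n : nat := max_nat (G_set psi A n).

Definition H_set psi A n (k : nat) : Prop :=
  exists T, A T /\ psi_a psi T <= n /\ psi_d psi T = k.
Definition H_defined psi A n : Prop := finite_natset (H_set psi A n).
Definition H_psiA psi A n : nat := max_nat (H_set psi A n).

(* Let a be an irreducible annihilating word of length m for a table T of A
   with m_psi(T) <= n.  Deleting the columns outside a and labelling every row
   with the set of attributes at which it violates a gives a table T' of A.
   Querying one letter (f, d) of a and answering f when the value is not d is a
   nondeterministic tree for T', so psi^a(T') <= m_psi(T') <= n.  By
   irreducibility each letter has a row of T' violating a at that letter only;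
   any two of these rows agree outside their two letters, so a deterministic
   tree for T' must ask m - 1 questions along some path, and psi^d(T') >= m - 1
   because psi is bounded.  Hence G(T) - 1 <= H(n) on A_psi(n). *)
From mathcomp Require Import all_boot finmap.
From Stdlib Require Import ClassicalEpsilon.
Set Implicit Arguments. Unset Strict Implicit. Unset Printing Implicit Defensive.
Local Open Scope fset_scope.

Definition asbool (P : Prop) : bool :=
  if excluded_middle_informative P then true else false.

Lemma asboolP (P : Prop) : reflect P (asbool P).
Proof. by rewrite /asbool; case: excluded_middle_informative => h; constructor. Qed.

Lemma least_natP (P : nat -> Prop) k : P k -> P (least_nat P) /\ least_nat P <= k.
Proof.
move=> Pk; have exP : exists m, asbool (P m) by exists k; apply/asboolP.
have [m /asboolP Pm min_m] := ex_minnP exP.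
have [Pl Pl_min] : P (least_nat P) /\ forall j, P j -> least_nat P <= j.
  by apply: (epsilon_spec (inhabits 0) (fun k => P k /\ forall j, P j -> k <= j));
    exists m; split=> // j /asboolP /min_m.
by split=> //; apply: Pl_min.
Qed.

Lemma max_natP (P : nat -> Prop) k B : P k -> (forall j, P j -> j <= B) ->
  P (max_nat P) /\ forall j, P j -> j <= max_nat P.
Proof.
move=> Pk PB; have exP : exists m, asbool (P m) by exists k; apply/asboolP.
have ubP j : asbool (P j) -> j <= B by move/asboolP/PB.
have [m /asboolP Pm max_m] := ex_maxnP exP ubP.
by apply: (epsilon_spec (inhabits 0) (fun k => P k /\ forall j, P j -> j <= k));
  exists m; split=> // j /asboolP /max_m.
Qed.

Lemma finite_natsetP (P : nat -> Prop) :
  finite_natset P <-> exists B, forall j, P j -> j <= B.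
Proof.
split=> [[s Ps]|[B PB]].
  by exists (\max_(x <- s) x) => j /Ps js; apply: (leq_bigmax_seq (F := id)).
by exists (iota 0 B.+1) => k /PB; rewrite mem_iota add0n ltnS.
Qed.

Lemma mem_flatten_map (X : Type) (Y : eqType) (F : X -> seq Y) (s : seq X) y :
  y \in flatten (map F s) <-> exists2 x, List.In x s & y \in F x.
Proof.
elim: s => [|x s IHs] /=; first by split=> // -[].
rewrite mem_cat; split=> [/orP[yF|/IHs[z zs yF]]|[z [<-|zs] yF]].
- by exists x; first left.
- by exists z; first right.
- by rewrite yF.
- by apply/orP; right; apply/IHs; exists z.
Qed.

Lemma trows_sub T w : trows (sub T w) = [seq r <- trows T | agrees T r.1 w].
Proof. by rewrite /sub; case: eqP. Qed.

Lemma sub_LambdaP T w :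
  sub T w = Lambda <-> ~~ has (fun r => agrees T r.1 w) (trows T).
Proof.
rewrite has_filter negbK /sub; case: eqP => // rows_ne.
by split=> // -[].
Qed.

Lemma sub_eq_mem T w w' : w =i w' -> sub T w = sub T w'.
Proof.
move=> eq_ww'; rewrite /sub.
by under eq_filter => r do rewrite /agrees (eq_all_r eq_ww').
Qed.

Lemma in_PiP d X : reflect (forall r, r \in trows X -> d \in r.2) (in_Pi d X).
Proof. exact: (@allP _ (fun r : seq bool * {fset nat} => d \in r.2)). Qed.

(** * Irreducible annihilating words *)

Definition mismatch (val : nat -> bool) (a : word) : seq nat :=
  [seq l.1 | l <- a & val l.1 != l.2].

Lemma has_mismatch val a : (mismatch val a != [::]) = has (fun l => val l.1 != l.2) a.
Proof. by rewrite /mismatch -size_eq0 size_map size_eq0 -has_filter. Qed.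

Lemma mismatch_single val a k l : mismatch val a = [:: k] -> l \in a -> l.1 != k ->
  val l.1 = l.2.
Proof.
move=> mis_k la lk; apply/eqP; apply: contraNT lk => val_l.
have : l.1 \in mismatch val a by rewrite map_f // mem_filter val_l.
by rewrite mis_k inE.
Qed.

Lemma mismatch_neq_nil T a r :
  sub T a = Lambda -> r \in trows T -> mismatch (value T r.1) a != [::].
Proof.
move=> /sub_LambdaP/hasPn/(_ r) a_Lam /a_Lam/allPn[l la vl].
by rewrite has_mismatch; apply/hasP; exists l.
Qed.

Section Irreducible.

Variables (T : table) (a : word).
Hypothesis irr_a : irreducible T a.

Lemma irreducible_rem l : l \in a -> sub T (rem l a) <> Lambda.
Proof.
case: irr_a => -[a_cols a_Lam a_cons] a_min la rem_Lam.
apply: (a_min _ (rem_subseq l a)).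
  by rewrite size_rem // prednK // lt0n size_eq0; apply: contraTneq la => ->.
split=> // [f /mapP[x /mem_rem xa ->]|l1 l2 /mem_rem l1a /mem_rem l2a].
  by apply: a_cols; apply: map_f.
exact: a_cons.
Qed.

Lemma irreducible_uniq : uniq a.
Proof.
apply: count_mem_uniq => l; have [la|/count_memPn-> //] := boolP (l \in a).
rewrite (permP (perm_to_rem la)) /= eqxx add1n.
suff -> : count_mem l (rem l a) = 0 by [].
apply/count_memPn/negP => lr; apply: (irreducible_rem la).
have [_ <- _] := irr_a.1; apply: sub_eq_mem => x.
have [-> | xl] := eqVneq x l; first by rewrite lr la.
by rewrite (perm_mem (perm_to_rem la)) in_cons (negbTE xl).
Qed.

Lemma irreducible_uniq_keys : uniq (map fst a).
Proof.
have [[_ _ a_cons] _] := irr_a.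
rewrite map_inj_in_uniq ?irreducible_uniq // => -[f b] [f' b'] la la' /= eq_f.
by move: (a_cons _ _ la la' eq_f) => /= <-; rewrite eq_f.
Qed.

Lemma irreducible_critical_row l : l \in a ->
  exists2 r, r \in trows T & mismatch (value T r.1) a = [:: l.1].
Proof.
move=> la; have : has (fun r => agrees T r.1 (rem l a)) (trows T).
  by apply/negPn/negP => /sub_LambdaP/(irreducible_rem la).
case/hasP => r rT r_rem.
have agr_rem x : x \in a -> x != l -> value T r.1 x.1 = x.2.
  move=> xa xl; have : x \in rem l a by rewrite mem_rem_uniq ?irreducible_uniq // inE xl xa.
  by move/(allP r_rem)/eqP.
exists r => //; rewrite /mismatch.
suff -> : [seq l' <- a | value T r.1 l'.1 != l'.2] = [:: l] by [].
rewrite -(filter_pred1_uniq irreducible_uniq la); apply: eq_in_filter => l' l'a /=.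
have [-> | l'l] := eqVneq l' l; last by rewrite agr_rem ?eqxx.
apply/negP => /eqP vl.
have [[_ /sub_LambdaP/hasPn/(_ r rT)/negP a_Lam _] _] := irr_a; apply: a_Lam.
by apply/allP => x xa; have [-> | xl] := eqVneq x l; rewrite ?vl ?agr_rem.
Qed.

End Irreducible.

(** * Decision trees *)

(* [dnode] has no [eqType] structure, so children are handled with [List.In]. *)
Definition dnode_nested_ind (P : dnode -> Prop) (P_Leaf : forall d, P (Leaf d))
    (P_Node : forall f ch, (forall e, List.In e ch -> P e.2) -> P (Node f ch)) :
    forall t, P t :=
  fix F t := match t with
  | Leaf d => P_Leaf d
  | Node f ch => P_Node f ch
      ((fix Fch (ch : seq (bool * dnode)) : forall e, List.In e ch -> P e.2 :=
          match ch with
          | [::] => fun e e_in => match e_in with end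
          | e' :: ch' => fun e e_in => match e_in with
              | or_introl eq_e => eq_ind e' (fun e => P e.2) (F e'.2) e eq_e
              | or_intror e_in' => Fch ch' e e_in'
              end
          end) ch)
  end.

Lemma mem_node_paths_Node f ch p :
  p \in node_paths (Node f ch) <->
  exists2 e, List.In e ch & exists2 q, q \in node_paths e.2 & p = ((f, e.1) :: q.1, q.2).
Proof.
rewrite /= mem_flatten_map; split=> -[e e_ch pe]; exists e => //.
  by case/mapP: pe => q; exists q.
by apply/mapP; case: pe => q; exists q.
Qed.

Lemma agrees_node_path T v f ch p : p \in node_paths (Node f ch) -> agrees T v p.1 ->
  exists2 e, List.In e ch & value T v f = e.1 /\
    exists2 q, q \in node_paths e.2 & agrees T v q.1 /\ q.2 = p.2.
Proof.
case/mem_node_paths_Node => e e_ch [q q_e ->] /= /andP[/eqP vf vq].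
by exists e => //; split => //; exists q.
Qed.

Lemma node_attrs_child f ch e : List.In e ch ->
  {subset node_attrs e.2 <= node_attrs (Node f ch)}.
Proof.
by move=> e_ch g g_e; rewrite /= inE; apply/orP; right; apply/mem_flatten_map; exists e.
Qed.

Lemma mem_map_In (X : Type) (Y : eqType) (F : X -> Y) (s : seq X) x :
  List.In x s -> F x \in map F s.
Proof. by elim: s => //= y s IHs [->|/IHs]; rewrite inE ?eqxx // => ->; rewrite orbT. Qed.

Lemma all_In (X : Type) (P : pred X) (s : seq X) x : all P s -> List.In x s -> P x.
Proof. by elim: s => //= y s IHs /andP[Py Ps] [<- | /(IHs Ps)]. Qed.

Lemma det_child_eq (ch : seq (bool * dnode)) e e' : uniq (map fst ch) ->
  List.In e ch -> List.In e' ch -> e.1 = e'.1 -> e = e'.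
Proof.
elim: ch => [|x ch IHch] //= /andP[x_ch ch_uniq] [<-|e_ch] [<-|e'_ch] eq_e //.
- by rewrite eq_e (mem_map_In fst e'_ch) in x_ch.
- by rewrite -eq_e (mem_map_In fst e_ch) in x_ch.
- exact: IHch.
Qed.

Lemma size_drop_key (K : seq nat) f : uniq K -> size K <= (size [seq k <- K | k != f]).+1.
Proof.
move=> K_uniq; rewrite -(count_predC (fun k => k != f) K) size_filter -addn1 leq_add2l.
have -> : count (predC (fun k => k != f)) K = count_mem f K.
  by apply: eq_count => k /=; rewrite negbK.
by rewrite count_uniq_mem ?leq_b1.
Qed.

(* [R k v] reads "[v] is a row with answer [k]".  Rows with different answers
   agree outside these answers, so at a node querying [f] all rows whose answer is
   not [f] follow the same edge. *)
Lemma det_path_length T (R : nat -> seq bool -> Prop) t (K : seq nat) : det_node t -> uniq K -> 0 < size K ->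
  (forall k k' v v' f, k \in K -> k' \in K -> R k v -> R k' v' ->
     f \in node_attrs t -> f != k -> f != k' -> value T v f = value T v' f) ->
  (forall k, k \in K -> exists2 v, R k v &
     exists2 p, p \in node_paths t & agrees T v p.1 /\ p.2 = k) ->
  exists2 p, p \in node_paths t & size K <= (size p.1).+1.
Proof.
elim/dnode_nested_ind: t K => [d|f ch IHch] K /= t_det K_uniq K_pos agree reach.
  exists ([::], d); first exact: mem_head.
  apply: (uniq_leq_size (s2 := [:: d])) => // k /reach[v _ [p]].
  by rewrite inE => /eqP -> [_ <-]; apply: mem_head.
case/andP: t_det => ch_uniq ch_det.
have route k : k \in K -> exists2 v, R k v & exists2 e, List.In e ch &
    value T v f = e.1 /\ exists2 q, q \in node_paths e.2 & agrees T v q.1 /\ q.2 = k.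
  move=> kK; have [v Rkv [p p_t [v_p p_k]]] := reach k kK.
  by exists v => //; rewrite -p_k; exact: agrees_node_path p_t v_p.
have lift e q : List.In e ch -> q \in node_paths e.2 ->
    ((f, e.1) :: q.1, q.2) \in node_paths (Node f ch).
  by move=> e_ch q_e; apply/mem_node_paths_Node; exists e => //; exists q.
set K' := [seq k <- K | k != f].
have size_K : size K <= (size K').+1 := size_drop_key f K_uniq.
have [K'0 | [k0 k0K']] : K' = [::] \/ exists k0, k0 \in K'.
  by case: (K') => [|k0 ?]; [left | right; exists k0; apply: mem_head].
  have [k kK] : exists k, k \in K by case: (K) K_pos => // k ?; exists k; apply: mem_head.
  have [_ _ [e e_ch [_ [q q_e _]]]] := route k kK.
  by exists ((f, e.1) :: q.1, q.2); [apply: lift | rewrite (leq_trans size_K) // K'0].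
have K'K : {subset K' <= K} by move=> k; rewrite mem_filter => /andP[].
have [v0 Rv0 [e0 e0_ch [v0f _]]] := route k0 (K'K _ k0K').
have via_e0 k : k \in K' -> exists2 v, R k v &
    exists2 q, q \in node_paths e0.2 & agrees T v q.1 /\ q.2 = k.
  move=> kK'; have [v Rkv [e e_ch [vf q_e]]] := route k (K'K _ kK').
  suff <- : e = e0 by exists v.
  apply: det_child_eq e_ch e0_ch _ => //; rewrite -vf -v0f.
  move: kK' k0K'; rewrite !mem_filter => /andP[kf kK] /andP[k0f k0K].
  by apply: (agree k k0) => //; [apply: mem_head | rewrite eq_sym | rewrite eq_sym].
have [||||q q_e size_K'] := IHch e0 e0_ch K' _ _ _ _ via_e0.
- exact: all_In ch_det e0_ch.
- exact: filter_uniq.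
- by rewrite lt0n size_eq0; apply: contraTneq k0K' => ->.
- move=> k k' v v' g /K'K kK /K'K k'K Rkv Rk'v' /(node_attrs_child f e0_ch).
  exact: agree.
by exists ((f, e0.1) :: q.1, q.2); [apply: lift | apply: leq_trans size_K _].
Qed.

Definition probe_tree (a : word) : dtree := [seq Node l.1 [:: (~~ l.2, Leaf l.1)] | l <- a].

Lemma tree_paths_probe_tree a :
  tree_paths (probe_tree a) = [seq ([:: (l.1, ~~ l.2)], l.1) | l <- a].
Proof. by elim: a => //= l a; rewrite /tree_paths /= => ->. Qed.

Lemma tree_attrs_probe_tree a : tree_attrs (probe_tree a) = map fst a.
Proof. by elim: a => //= l a; rewrite /tree_attrs /= => ->. Qed.

Fixpoint full_tree (fs : seq nat) (g : word -> nat) : dnode :=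
  if fs is f :: fs' then
    Node f [seq (b, full_tree fs' (fun w => g ((f, b) :: w))) | b <- [:: true; false]]
  else Leaf (g [::]).

Lemma full_tree_det fs g : det_node (full_tree fs g) && wf_node (full_tree fs g).
Proof.
elim: fs g => //= f fs IHfs g.
case/andP: (IHfs (fun w => g ((f, true) :: w))) => -> ->.
by case/andP: (IHfs (fun w => g ((f, false) :: w))) => -> ->.
Qed.

Lemma node_attrs_full_tree fs g : {subset node_attrs (full_tree fs g) <= fs}.
Proof.
elim: fs g => //= f fs IHfs g h; rewrite !inE cats0 mem_cat.
by case/orP=> [-> // | /orP[] /IHfs ->]; rewrite orbT.
Qed.

Lemma node_paths_full_tree fs g p : uniq fs -> p \in node_paths (full_tree fs g) ->
  exists h : nat -> bool, p = ([seq (f, h f) | f <- fs], g [seq (f, h f) | f <- fs]).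
Proof.
elim: fs g p => [|f fs IHfs] g p; first by rewrite inE => _ /eqP ->; exists xpredT.
case/andP=> f_fs fs_uniq /mem_node_paths_Node[e e_ch [q q_e ->]].
have [b eq_e] : exists b, e = (b, full_tree fs (fun w => g ((f, b) :: w))).
  by case: e_ch => [<- | [<- | []]]; [exists true | exists false].
rewrite eq_e in q_e *; have [h ->] := IHfs _ _ fs_uniq q_e.
exists (fun x => if x == f then b else h x); rewrite /= eqxx.
suff -> : [seq (x, h x) | x <- fs] = [seq (x, if x == f then b else h x) | x <- fs] by [].
by apply/eq_in_map => x x_fs; rewrite ifN //; apply: contraNneq f_fs => <-.
Qed.

Lemma full_tree_path fs g (h : nat -> bool) :
  ([seq (f, h f) | f <- fs], g [seq (f, h f) | f <- fs]) \in node_paths (full_tree fs g).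
Proof.
elim: fs g => [|f fs IHfs] g; first exact: mem_head.
apply/mem_node_paths_Node; exists (h f, full_tree fs (fun w => g ((f, h f) :: w))).
  by case: (h f); [left | right; left].
by eexists; first exact: IHfs.
Qed.

Lemma mem_graph (h : nat -> bool) (s : seq nat) l :
  (l \in [seq (f, h f) | f <- s]) = (l.1 \in s) && (h l.1 == l.2).
Proof.
case: l => f b /=; apply/mapP/andP => [[g gs [-> ->]] | [fs /eqP <-]] //.
by exists f.
Qed.

(** * Tables asking for a violated letter *)

(* [T] is the problem "name the attribute of a letter of [a] that the row violates". *)
Definition violation_table (T : table) (a : word) : Prop :=
  [/\ tcols T =i map fst a,
      forall x, x \in trows T ->
        mismatch (value T x.1) a != [::] /\ x.2 =i mismatch (value T x.1) a
    & forall l, l \in a -> exists2 x, x \in trows T & mismatch (value T x.1) a = [:: l.1]].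

Definition scan_tree (a : word) : dnode :=
  full_tree (map fst a) (fun w => head 0 [seq l.1 | l <- a & l \notin w]).

Section ViolationTable.

Variables (T : table) (a : word).
Hypotheses (T_viol : violation_table T a) (a_ne : a != [::]).

Lemma violation_table_neq_Lambda : T <> Lambda.
Proof.
have [l la] : exists l, l \in a by case: (a) a_ne => // l ?; exists l; apply: mem_head.
by have [_ _ /(_ l la)[x + _]] := T_viol => /[swap] ->.
Qed.

Lemma ndt_probe_tree : ndt_for T (probe_tree a).
Proof.
have [cols_a rows_a _] := T_viol.
split.
- by rewrite /wf_tree size_map lt0n size_eq0 a_ne all_map; apply/allP.
- by move=> f; rewrite tree_attrs_probe_tree /At cols_a.
- move=> x xT; have [+ _] := rows_a x xT.
  rewrite has_mismatch => /hasP[l la vl].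
  exists ([:: (l.1, ~~ l.2)], l.1); first by rewrite tree_paths_probe_tree map_f.
  by rewrite trows_sub mem_filter xT /agrees /= andbT; move: vl; case: value; case: l.2.
- move=> p; rewrite tree_paths_probe_tree => /mapP[l la ->]; right.
  apply/in_PiP => y; rewrite trows_sub mem_filter /agrees /= andbT => /andP[/eqP vy yT].
  have [_ ->] := rows_a y yT; apply: map_f.
  by rewrite mem_filter vy la andbT; case: (l.2).
Qed.

Lemma psi_a_le_m_psi psi : psi_a psi T <= m_psi psi T.
Proof.
have [cols_a _ _] := T_viol.
rewrite /psi_a; case: ifP => // _.
have [_ /leq_trans] := least_natP
  (P := fun k => exists G, ndt_for T G /\ tree_cost psi G = k)
  (ex_intro _ _ (conj ndt_probe_tree erefl)).
apply.
rewrite /tree_cost tree_paths_probe_tree big_map; apply/bigmax_leqP_seq => l la _.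
by apply: (leq_bigmax_seq (F := fun f => psi [:: f])); rewrite /= ?cols_a ?map_f.
Qed.

Hypothesis keys_uniq : uniq (map fst a).

Lemma dt_scan_tree : dt_for T [:: scan_tree a].
Proof.
have [cols_a rows_a _] := T_viol.
have /andP[t_det t_wf] := full_tree_det (map fst a)
  (fun w => head 0 [seq l.1 | l <- a & l \notin w]).
have paths : tree_paths [:: scan_tree a] = node_paths (scan_tree a).
  by rewrite /tree_paths /= cats0.
split=> //; last by rewrite /= t_det.
split.
- by rewrite /wf_tree /= t_wf.
- by move=> f; rewrite /tree_attrs /= cats0 /At cols_a => /node_attrs_full_tree.
- move=> x xT; rewrite paths; eexists; first exact: full_tree_path _ _ (value T x.1).
  rewrite trows_sub mem_filter xT andbT; apply/allP => _ /mapP[f _ ->] /=; exact: eqxx.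
- move=> p; rewrite paths => /(node_paths_full_tree keys_uniq)[h ->]; right.
  apply/in_PiP => y; rewrite trows_sub mem_filter => /andP[y_agr yT].
  have [mis_ne ->] := rows_a y yT.
  have -> : [seq l <- a | l \notin [seq (f, h f) | f <- map fst a]] =
            [seq l <- a | value T y.1 l.1 != l.2].
    apply: eq_in_filter => l la; rewrite mem_graph map_f //=.
    have /(allP y_agr)/eqP -> // : (l.1, h l.1) \in [seq (f, h f) | f <- map fst a].
    exact/map_f/map_f.
  change (head 0 (mismatch (value T y.1) a) \in mismatch (value T y.1) a).
  by case: (mismatch _ _) mis_ne => // d s _; apply: mem_head.
Qed.

Lemma dt_path_long t : dt_for T [:: t] ->
  exists2 p, p \in node_paths t & size a <= (size p.1).+1.
Proof.
have [cols_a rows_a crit_a] := T_viol.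
case=> -[_ attrs_t cover_t correct_t] _ /andP[t_det _].
have paths : tree_paths [:: t] = node_paths t by rewrite /tree_paths /= cats0.
pose R k v := exists2 x, x \in trows T & x.1 = v /\ mismatch (value T v) a = [:: k].
rewrite -(size_map fst); apply: (@det_path_length T R t _ t_det keys_uniq).
- by rewrite size_map lt0n size_eq0.
- move=> k k' v v' f _ _ [x _ [_ mis_v]] [x' _ [_ mis_v']] f_t fk fk'.
  have : f \in map fst a by rewrite -cols_a; apply: attrs_t; rewrite /tree_attrs /= cats0.
  case/mapP => l la eq_f; rewrite eq_f in fk fk' *.
  by rewrite (mismatch_single mis_v la fk) (mismatch_single mis_v' la fk').
- move=> _ /mapP[l la ->]; have [x xT mis_x] := crit_a l la.
  exists x.1; first by exists x.
  have [p pt x_p] := cover_t x xT; exists p; first by rewrite -paths.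
  move: (x_p); rewrite trows_sub mem_filter => /andP[x_agr _]; split=> //.
  case: (correct_t p pt) => [sub_Lam | /in_PiP/(_ x x_p)]; first by rewrite sub_Lam in x_p.
  by have [_ ->] := rows_a x xT; rewrite mis_x inE => /eqP.
Qed.

Lemma psi_d_ge psi : bounded_measure psi -> size a - 1 <= psi_d psi T.
Proof.
move=> [_ psi_size]; rewrite /psi_d.
case: (excluded_middle_informative (T = Lambda)) => [T_Lam | _] /=.
  by case: violation_table_neq_Lambda.
have [[G [G_dt <-]] _] := least_natP
  (P := fun k => exists G, dt_for T G /\ tree_cost psi G = k)
  (ex_intro _ _ (conj dt_scan_tree erefl)).
have [t eq_G] : exists t, G = [:: t] by case: G_dt => _; case: G => [|t []] //; exists t.
rewrite eq_G in G_dt *; have [p p_t size_a] := dt_path_long G_dt.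
rewrite leq_subLR add1n (leq_trans size_a) // ltnS.
rewrite -(size_map fst); apply: leq_trans (psi_size _) _.
apply: (leq_bigmax_seq (F := fun q => psi_word psi q.1)) => //.
by rewrite /tree_paths /= cats0.
Qed.

End ViolationTable.

(** * Restriction to the attributes of a word *)

Lemma mem_dedup_first seen s x : x \in dedup_first seen s -> x \in s.
Proof.
elim: s seen => [|y s IHs] seen //=; case: ifP => _ => [/IHs|].
  by rewrite inE orbC => ->.
by rewrite !inE => /orP[-> | /IHs ->]; rewrite ?orbT.
Qed.

Lemma dedup_first_cover seen s y : y \in s -> y.1 \notin seen ->
  exists2 x, x \in dedup_first seen s & x.1 = y.1.
Proof.
elim: s seen => [|z s IHs] seen //=; rewrite inE => /orP[/eqP -> | ys] y_seen.
  by rewrite (negbTE y_seen); exists z; rewrite ?mem_head.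
case: ifP => z_seen; first exact: IHs.
have [eq_yz | ne_yz] := eqVneq y.1 z.1; first by exists z; rewrite ?mem_head.
have [|x xs <-] := IHs (z.1 :: seen) ys; first by rewrite inE negb_or ne_yz.
by exists x; rewrite // inE xs orbT.
Qed.

Lemma nth_proj D T v f : f \in tcols T -> f \notin D ->
  nth false (proj D T v) (index f (remaining D T)) = value T v f.
Proof.
rewrite /proj /remaining /value; case: T => c rs /=.
elim: c v => [|g c IHc] [|b v] //= fc fD; first by rewrite !nth_nil.
have [eq_gf | ne_gf] := eqVneq g f; first by subst g; rewrite fD /= eqxx.
move: fc; rewrite inE eq_sym (negbTE ne_gf) /= => fc.
by case: ifP => _ /=; rewrite ?(negbTE ne_gf) /= IHc.
Qed.

Lemma m_psi_subset psi T T' : {subset tcols T' <= tcols T} -> m_psi psi T' <= m_psi psi T.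
Proof.
move=> cols_T'; apply/bigmax_leqP_seq => f fT' _.
exact: (leq_bigmax_seq (F := fun f => psi [:: f]) _ (cols_T' f fT')).
Qed.

Definition off_cols (a : word) (T : table) : seq nat := [seq f <- tcols T | f \notin map fst a].
Definition on_cols (a : word) (T : table) : seq nat := [seq f <- tcols T | f \in map fst a].

Lemma remaining_off_cols a T : remaining (off_cols a T) T = on_cols a T.
Proof. by apply: eq_in_filter => f fT; rewrite mem_filter fT andbT negbK. Qed.

(* A vector violating no letter gets the junk decision set {0}: J needs a
   nonempty set for every vector, and no row of a [word_table] is of this kind. *)
Definition violated_letters (c : seq nat) (a : word) (v : seq bool) : {fset nat} :=
  let m := mismatch (fun f => nth false v (index f c)) a in
  if m == [::] then [fset 0] else seq_fset tt m.

Lemma violated_letters_neq0 c a v : violated_letters c a v != fset0.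
Proof.
rewrite /violated_letters; case: ifP => [_ | ].
  by apply/fset0Pn; exists 0; rewrite in_fset1.
case: (mismatch _ _) => // d m _; apply/fset0Pn; exists d.
by rewrite seq_fsetE mem_head.
Qed.

Definition word_table (T : table) (a : word) : table :=
  opJ (violated_letters (on_cols a T) a) (opI (off_cols a T) T).

Lemma word_table_in_span T a : in_span T (word_table T a).
Proof.
exists (off_cols a T), (violated_letters (on_cols a T) a); split.
  by move=> f; rewrite mem_filter => /andP[].
by split=> // v _; apply: violated_letters_neq0.
Qed.

Lemma tcols_word_table T a : tcols (word_table T a) = on_cols a T.
Proof. by rewrite /word_table /opI remaining_off_cols; case: eqP. Qed.

Lemma trows_word_table T a x : x \in trows (word_table T a) ->
  exists2 r, r \in trows T & x = (proj (off_cols a T) T r.1,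
                                  violated_letters (on_cols a T) a (proj (off_cols a T) T r.1)).
Proof.
rewrite /word_table /opI; case: eqP => // _ /mapP[y /mem_dedup_first /mapP[r rT ->] ->].
by exists r.
Qed.

Lemma value_word_table T a v f : f \in tcols T -> f \in map fst a ->
  value (word_table T a) (proj (off_cols a T) T v) f = value T v f.
Proof.
move=> fT fa; rewrite /value tcols_word_table -remaining_off_cols nth_proj //.
by rewrite mem_filter fa.
Qed.

Lemma mismatch_word_table T a v : {subset map fst a <= tcols T} ->
  mismatch (value (word_table T a) (proj (off_cols a T) T v)) a = mismatch (value T v) a.
Proof.
move=> a_cols; congr map; apply: eq_in_filter => l la.
by rewrite value_word_table ?a_cols ?map_f.
Qed.

Section WordTable.

Variables (T : table) (a : word).
Hypotheses (a_ne : a != [::]) (a_cols : {subset map fst a <= tcols T}).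

Lemma word_table_row r : r \in trows T ->
  exists2 x, x \in trows (word_table T a) & x.1 = proj (off_cols a T) T r.1.
Proof.
move=> rT; have [l la] : exists l, l \in a.
  by case: (a) a_ne => // l ?; exists l; apply: mem_head.
rewrite /word_table /opI; case: eqP => [on_nil | _].
  have : l.1 \in on_cols a T by rewrite mem_filter map_f // a_cols // map_f.
  by rewrite -remaining_off_cols on_nil.
have [y y_in y_r] := dedup_first_cover (seen := [::])
  (map_f (fun r => (proj (off_cols a T) T r.1, r.2)) rT) isT.
by eexists; first exact: (map_f _ y_in).
Qed.

Lemma violation_word_table : irreducible T a -> violation_table (word_table T a) a.
Proof.
move=> irr_a; split.
- move=> f; rewrite tcols_word_table mem_filter.
  by apply/andP/idP => [[] | fa] //; split=> //; apply: a_cols.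
- move=> x /trows_word_table[r rT ->] /=; rewrite mismatch_word_table //.
  have [[_ a_Lam _] _] := irr_a; have mis_r := mismatch_neq_nil a_Lam rT.
  split=> // d; rewrite /violated_letters.
  have -> : (fun f : nat => nth false (proj (off_cols a T) T r.1) (index f (on_cols a T))) =
            value (word_table T a) (proj (off_cols a T) T r.1).
    by rewrite /value tcols_word_table.
  by rewrite mismatch_word_table // (negbTE mis_r) seq_fsetE.
- move=> l la; have [r rT mis_r] := irreducible_critical_row irr_a la.
  have [x xW x_r] := word_table_row rT.
  by exists x; rewrite // x_r mismatch_word_table.
Qed.

End WordTable.

Lemma closed_class_Lambda A : closed_class A -> A Lambda.
Proof.
case=> _ [[T AT] clA]; apply/clA; exists T; split=> //.
exists (tcols T), (fun _ => [fset 0]); split=> //; split.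
  by move=> v _; apply/fset0Pn; exists 0; rewrite in_fset1.
rewrite /opI (_ : remaining _ _ = [::]) // -(filter_pred0 (tcols T)).
by apply: eq_in_filter => f ->.
Qed.

Lemma irreducible_size_le A psi n T a :
  closed_class A -> bounded_measure psi -> H_defined psi A n -> A_psi psi A n T ->
  irreducible T a -> size a - 1 <= H_psiA psi A n.
Proof.
move=> [_ [_ clA]] psi_b H_def [AT mT] irr_a.
have /finite_natsetP[B HB] : finite_natset (H_set psi A n) := H_def.
have [-> // | a_ne] := eqVneq a [::].
have [[a_cols _ _] _] := irr_a.
have T'_viol := violation_word_table a_ne a_cols irr_a.
have AT' : A (word_table T a) by apply/clA; exists T; split=> //; apply: word_table_in_span.
have psi_a_T' : psi_a psi (word_table T a) <= n.
  apply: leq_trans (psi_a_le_m_psi T'_viol a_ne psi) (leq_trans _ mT).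
  by apply: m_psi_subset => f; rewrite tcols_word_table mem_filter => /andP[].
apply: leq_trans (psi_d_ge T'_viol a_ne (irreducible_uniq_keys irr_a) psi_b) _.
have H_T' : H_set psi A n (psi_d psi (word_table T a)) by exists (word_table T a).
by have [_ ->] := max_natP H_T' HB.
Qed.

Lemma G_tab_le A psi n T :
  closed_class A -> bounded_measure psi -> H_defined psi A n -> A_psi psi A n T ->
  G_tab T <= (H_psiA psi A n).+1.
Proof.
move=> A_cl psi_b H_def T_n; rewrite /G_tab; case: ifP => // _.
case: (excluded_middle_informative (exists a, irreducible T a)) => // -[a irr_a].
have le_H k : (exists a, irreducible T a /\ size a = k) -> k <= (H_psiA psi A n).+1.
  by case=> b [irr_b <-]; rewrite -add1n -leq_subLR; apply: irreducible_size_le irr_b.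
by have [/le_H] := max_natP (ex_intro _ a (conj irr_a erefl)) le_H.
Qed.

Unset Implicit Arguments.

Theorem lemma15 (A : table -> Prop) (psi : seq nat -> nat) :
  closed_class A -> nontrivial A -> bounded_measure psi ->
  (forall n, H_defined psi A n) ->
  forall n, G_defined psi A n /\ G_psiA psi A n - 1 <= H_psiA psi A n.
Proof.
move=> A_cl _ psi_b H_def n.
have G_le k : G_set psi A n k -> k <= (H_psiA psi A n).+1.
  by case=> T [T_n <-]; apply: G_tab_le.
split; first by apply/finite_natsetP; exists (H_psiA psi A n).+1.
have G_Lambda : G_set psi A n 0.
  exists Lambda; split; first by split; [apply: closed_class_Lambda | rewrite /m_psi big_nil].
  by rewrite /G_tab; case: (excluded_middle_informative (Lambda = Lambda)).
by have [/G_le] := max_natP G_Lambda G_le; rewrite leq_subLR add1n.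
Qed.
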